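(* Let $\mathcal H\subseteq\mathcal Y^{\mathcal X}$, $S\in\mathcal X^n$. Then $\mathsf{Hall}^{\mathrm{ag}}(G_{\mathrm{ag}}(\mathcal H|_S))$ is the greatest (supremum) $\alpha$ for which $G_{\mathrm{ag}}(\mathcal H|_S)$ is $\alpha$-agnostic-orientable, where orientations may be randomized (fractional).
   Context: For $S=(x_1,\dots,x_n)$ and $v\in\mathcal Y^n$, $\|v-\mathcal H\|_0=\min_{h\in\mathcal H}|\{i:h(x_i)\ne v_i\}|$. The agnostic one-inclusion graph $G_{\mathrm{ag}}(\mathcal H|_S)=(V,E)$ has $V=\mathcal Y^n$ and one edge for each $i\in[n]$ and each labeling $e$ of the coordinates other than $i$, incident to all $v$ agreeing with $e$ off coordinate $i$. A randomized (fractional) orientation assigns each edge a probability distribution over its incident vertices; indegree = total amount received. $G_{\mathrm{ag}}(\mathcal H|_S)$ is $\alpha$-agnostic-orientable if some such orientation gives every vertex $v$ indegree $\ge\alpha-\|v-\mathcal H\|_0$. For $U\subseteq V$, $E[U]$ is the set of edges with an incident node in $U$, and $\mathsf{Hall}^{\mathrm{ag}}(G_{\mathrm{ag}}(\mathcal H|_S))=\inf\big\{\big(|E[U]|+\sum_{u\in U}\|u-\mathcal H\|_0\big)/|U|: U\subseteq V, 0<|U|<\infty\big\}$. *)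

From HB Require Import structures.
From mathcomp Require Import all_boot all_order all_algebra.
From mathcomp Require Import finmap.
From mathcomp Require Import all_classical all_reals.
From mathcomp Require Import ereal esum.
Set Implicit Arguments. Unset Strict Implicit. Unset Printing Implicit Defensive.
Import Order.TTheory GRing.Theory Num.Theory.
Local Open Scope classical_set_scope.
Local Open Scope ring_scope.
Local Open Scope fset_scope.
Local Open Scope ereal_scope.
Local Open Scope ring_scope.

Section AgnosticOIG.
Variables (R : realType) (X : Type) (Y : choiceType) (n : nat).
Variables (H : set (X -> Y)) (S : 'I_n -> X).

Definition agV := {ffun 'I_n -> Y}.

Definition mismatch (h : X -> Y) (v : agV) : nat :=
  #|[set i : 'I_n | h (S i) != v i]|.

(* ||v - H||_0 = min_{h in H} mismatch, as an extended real
   (+oo when H is empty, by the convention inf set0 = +oo) *)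
Definition agdist (v : agV) : \bar R :=
  ereal_inf [set ((mismatch h v)%:R)%:E | h in H].

Definition agupd (v : agV) (i : 'I_n) (y : Y) : agV :=
  [ffun j => if j == i then y else v j].

(* The edge of direction i containing v is determined by the labeling of
   the coordinates other than i: key i v. *)
Definition edge_key (i : 'I_n) (v : agV) : 'I_n * {ffun 'I_n -> option Y} :=
  (i, [ffun j => if j == i then None else Some (v j)]).

Definition num_edges_touching (U : {fset agV}) : nat :=
  #|` [fset edge_key i v | i in [fset i | i in 'I_n], v in U] |.

Definition hall_ag : \bar R :=
  ereal_inf [set ((((num_edges_touching U)%:R)%:E + \sum_(u <- U) agdist u)
                   * ((#|` U|%:R)^-1)%:E)%E
            | U in [set U : {fset agV} | U != fset0]].

(* A randomized (fractional) orientation, encoded as o i v = probability mass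
   that the direction-i edge through v sends to the incident vertex v.
   The incident vertices of that edge are exactly the agupd v i y, y : Y,
   so the distribution condition is: nonnegative and total mass 1. *)
Definition rand_orientation (o : 'I_n -> agV -> R) : Prop :=
  (forall i v, 0 <= o i v) /\
  (forall i v, \esum_(y in [set: Y]) (o i (agupd v i y))%:E = 1%E).

Definition indegree (o : 'I_n -> agV -> R) (v : agV) : R :=
  \sum_(i < n) o i v.

Definition ag_orientable (alpha : R) : Prop :=
  exists o, rand_orientation o /\
    forall v : agV, (alpha%:E - agdist v <= (indegree o v)%:E)%E.

End AgnosticOIG.

From HB Require Import structures.
From mathcomp Require Import all_boot all_order all_algebra.
From mathcomp Require Import finmap.
From mathcomp Require Import all_classical all_reals.
From mathcomp Require Import ereal esum topology normedtype.
From mathcomp Require Import lra zify.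
Set Implicit Arguments. Unset Strict Implicit. Unset Printing Implicit Defensive.
Import Order.TTheory GRing.Theory Num.Theory numFieldNormedType.Exports.
Local Open Scope ring_scope.

(* An orientation sends at most one unit of mass through each edge, so the
   vertices of a finite set U receive at most |E[U]| in total, while each
   u in U needs alpha - ||u - H||_0: every achievable alpha is below
   Hall^ag.  Conversely let beta <= Hall^ag.  For finite F, give every edge
   meeting F supply 1 and every u in F demand beta - ||u - H||_0; the
   definition of Hall^ag is exactly Hall's condition, so the supply-demand
   (fractional Hall) theorem yields a partial orientation serving F.
   Partial orientations form a compact subset of [0,1]^([n] x Y^n)
   (Tychonoff) on which each demand is a closed constraint, so one of them
   serves all vertices; sending the mass an edge does not deliver to one
   fixed endpoint turns it into a randomized orientation. *)

Lemma sum_indicator_seq (R : pzSemiRingType) (T : eqType) (r : seq T) (x0 : T)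
    (g : T -> R) :
  uniq r -> \sum_(x <- r) ((x == x0)%:R * g x) = (x0 \in r)%:R * g x0.
Proof.
move=> ur; case: (boolP (x0 \in r)) => x0r.
  rewrite (bigD1_seq x0) //= eqxx mul1r big1 ?addr0 // => x /negbTE ->.
  by rewrite mul0r.
rewrite mul0r big_seq big1 // => x xr.
by case: eqVneq xr => [->|_ _]; [rewrite (negbTE x0r)|rewrite mul0r].
Qed.

Lemma sum_indicator (R : pzSemiRingType) (T : finType) (x0 : T) (g : T -> R) :
  \sum_x ((x == x0)%:R * g x) = g x0.
Proof. by rewrite sum_indicator_seq ?index_enum_uniq // mem_index_enum mul1r. Qed.

Lemma bigmin_attained (R : realDomainType) (I : finType) (P : pred I)
    (F : I -> R) (x0 : R) :
  \big[Num.min/x0]_(i | P i) F i = x0 \/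
  exists2 i, P i & \big[Num.min/x0]_(i | P i) F i = F i.
Proof.
elim/big_rec: _ => [|i x Pi]; first by left.
by case: leP => _ // _; right; exists i.
Qed.

Section SupplyDemand.
Variables (R : realFieldType) (A B : finType) (adj : A -> B -> bool).
Implicit Types (SA : {set A}) (SB U W : {set B}) (c : A -> R) (b : B -> R).

Definition nbhd U : {set A} := [set a | [exists v in U, adj a v]].

Definition feasible_flow SA SB c b (f : A -> B -> R) :=
  [/\ forall a v, 0 <= f a v,
      forall a v, f a v != 0 -> [&& adj a v, a \in SA & v \in SB],
      forall a, \sum_v f a v <= c a &
      forall v, v \in SB -> b v <= \sum_a f a v].

Definition hall_slack SA U c b :=
  \sum_(a in SA :&: nbhd U) c a - \sum_(v in U) b v.

Definition hall_condition SA SB c b :=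
  forall U, U \subset SB -> \sum_(v in U) b v <= \sum_(a in SA :&: nbhd U) c a.

Definition dec_at (T : eqType) (g : T -> R) (x0 : T) (t : R) (x : T) :=
  g x - (x == x0)%:R * t.

Lemma sum_dec_at (T : finType) (X : {pred T}) (g : T -> R) x0 t :
  \sum_(x in X) dec_at g x0 t x = \sum_(x in X) g x - (x0 \in X)%:R * t.
Proof.
rewrite sumrB; congr (_ - _).
by rewrite -big_enum (sum_indicator_seq x0 (fun=> t)) ?enum_uniq // mem_enum.
Qed.

Lemma dec_at_ge0 (T : eqType) (g : T -> R) x0 t x :
  (forall x, 0 <= g x) -> t <= g x0 -> 0 <= dec_at g x0 t x.
Proof.
move=> g0 tg; rewrite /dec_at.
by case: eqVneq => [->|]; rewrite ?mul1r ?mul0r ?subr_ge0 ?subr0.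
Qed.

Lemma dec_atxx (T : eqType) (g : T -> R) x0 : dec_at g x0 (g x0) x0 = 0.
Proof. by rewrite /dec_at eqxx mul1r subrr. Qed.

Lemma nbhdS U W : U \subset W -> nbhd U \subset nbhd W.
Proof.
move=> /fintype.subsetP sUW; apply/fintype.subsetP => x.
by rewrite !inE => /existsP[y /andP[yU ay]]; apply/existsP; exists y; rewrite sUW.
Qed.

Lemma nbhdU U W : nbhd (U :|: W) = nbhd U :|: nbhd W.
Proof.
apply/finset.setP => x; rewrite !inE; apply/existsP/orP.
  by move=> [y]; rewrite inE => /andP[/orP[] yin ay]; [left|right];
    apply/existsP; exists y; rewrite yin.
by move=> [] /existsP[y /andP[yin ay]]; exists y; rewrite inE yin ?orbT.
Qed.

Lemma feasible_flow_eq0 SA SB c b f a v :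
  feasible_flow SA SB c b f -> a \notin SA -> f a v = 0.
Proof. by move=> [_ fs _ _] aSA; apply/eqP; apply: contraNT aSA => /fs /and3P[]. Qed.

Lemma feasible_flow0 SA c b :
  (forall a, 0 <= c a) -> feasible_flow SA finset.set0 c b (fun _ _ => 0).
Proof.
by move=> c0; split=> // [a v|a|v]; rewrite ?eqxx ?inE ?big1.
Qed.

Lemma feasible_flow_supplyS SA SA' SB c b f :
  SA' \subset SA -> feasible_flow SA' SB c b f -> feasible_flow SA SB c b f.
Proof.
by move=> /fintype.subsetP sA [f0 fs fc fb]; split=> // a v /fs /and3P[-> /sA -> ->].
Qed.

Lemma feasible_flow_setD1_demand SA SB c b f v :
  b v <= 0 -> feasible_flow SA (SB :\ v) c b f -> feasible_flow SA SB c b f.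
Proof.
move=> bv [f0 fs fc fb]; split=> // [a y|y ySB].
  by move=> /fs /and3P[-> -> /setD1P[]].
case: (eqVneq y v) => [->|yv]; first by apply: le_trans bv (sumr_ge0 _ _).
by apply: fb; rewrite !inE yv.
Qed.

Lemma feasible_flow_augment SA SB c b a v t g :
  a \in SA -> v \in SB -> adj a v -> 0 <= t ->
  feasible_flow SA SB (dec_at c a t) (dec_at b v t) g ->
  feasible_flow SA SB c b (fun x y => g x y + (x == a)%:R * ((y == v)%:R * t)).
Proof.
move=> aSA vSB av t0 [g0 gs gc gb]; split.
- by move=> x y; rewrite addr_ge0 // !mulr_ge0.
- move=> x y /=; case: (eqVneq (g x y) 0) => [->|/gs //].
  rewrite add0r; case: (eqVneq x a) => [->|_]; last by rewrite mul0r eqxx.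
  case: (eqVneq y v) => [->|_]; last by rewrite mul0r mulr0 eqxx.
  by rewrite av aSA vSB.
- move=> x; rewrite big_split /= -mulr_sumr sum_indicator.
  by have := gc x; rewrite /dec_at; lra.
- move=> y ySB; rewrite big_split /= sum_indicator.
  by have := gb y ySB; rewrite /dec_at; lra.
Qed.

Lemma feasible_flow_split SA SB U0 c b f1 f2 :
  U0 \subset SB ->
  feasible_flow (SA :&: nbhd U0) U0 c b f1 ->
  feasible_flow (SA :\: nbhd U0) (SB :\: U0) c b f2 ->
  feasible_flow SA SB c b (fun x y => f1 x y + f2 x y).
Proof.
move=> /fintype.subsetP sU0 hf1 hf2; case: (hf1) => f10 f1s f1c f1b.
case: (hf2) => f20 f2s f2c f2b; split.
- by move=> x y; rewrite addr_ge0.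
- move=> x y; case: (eqVneq (f1 x y) 0) => [->|/f1s /and3P[-> /setIP[-> _] /sU0 ->]] //.
  by rewrite add0r => /f2s /and3P[-> /setDP[-> _] /setDP[-> _]].
- move=> x; rewrite big_split /=; case: (boolP (x \in nbhd U0)) => xN.
    rewrite [X in _ + X]big1 ?addr0 // => y _.
    by apply: feasible_flow_eq0 hf2 _; rewrite inE xN.
  rewrite [X in X + _]big1 ?add0r // => y _.
  by apply: feasible_flow_eq0 hf1 _; rewrite inE (negbTE xN) andbF.
- move=> y ySB; rewrite big_split /=; case: (boolP (y \in U0)) => yU.
    by apply: le_trans (f1b y yU) _; rewrite lerDl sumr_ge0.
  by apply: le_trans (f2b y _) _; rewrite ?inE ?yU // lerDr sumr_ge0.
Qed.

Lemma hall_condition_demandS SA SB SB' c b :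
  SB' \subset SB -> hall_condition SA SB c b -> hall_condition SA SB' c b.
Proof. by move=> sB hH U sU; apply: hH; apply: fintype.subset_trans sU sB. Qed.

Lemma hall_condition_setD1_supply SA SB c b a :
  c a = 0 -> hall_condition SA SB c b -> hall_condition (SA :\ a) SB c b.
Proof.
move=> ca hH U sU; apply: le_trans (hH U sU) _.
have -> : (SA :\ a) :&: nbhd U = (SA :&: nbhd U) :\ a by rewrite finset.setIDAC.
case: (boolP (a \in SA :&: nbhd U)) => aN.
  by rewrite [leLHS](big_setD1 a aN) /= ca add0r.
have /finset.setDidPl -> // : [disjoint SA :&: nbhd U & [set a]].
by rewrite disjoint_sym disjoints1.
Qed.

Lemma hall_condition_restrict SA SB U0 c b :
  U0 \subset SB -> hall_condition SA SB c b ->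
  hall_condition (SA :&: nbhd U0) U0 c b.
Proof.
move=> sU0 hH W sW.
have -> : SA :&: nbhd U0 :&: nbhd W = SA :&: nbhd W.
  by rewrite -finset.setIA; congr (_ :&: _); apply/finset.setIidPr/nbhdS.
by apply: hH; apply: fintype.subset_trans sW sU0.
Qed.

Lemma hall_condition_contract SA SB U0 c b :
  U0 \subset SB -> hall_slack SA U0 c b = 0 -> hall_condition SA SB c b ->
  hall_condition (SA :\: nbhd U0) (SB :\: U0) c b.
Proof.
move=> sU0 tight hH W sW.
have WU0 y : y \in W -> y \notin U0 by move/(fintype.subsetP sW)/setDP => [].
have sWU : W :|: U0 \subset SB.
  by rewrite finset.subUset sU0 andbT (fintype.subset_trans sW) ?subsetDl.
have := hH _ sWU.
rewrite [leLHS](big_setID U0) [leRHS](big_setID (nbhd U0)) /=.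
have -> : (W :|: U0) :&: U0 = U0.
  by apply/finset.setP => y; rewrite !inE; case: (y \in U0); rewrite ?orbT ?andbF.
have -> : (W :|: U0) :\: U0 = W.
  apply/finset.setP => y; rewrite !inE.
  by case: (boolP (y \in W)) => [/WU0 -> //|_] /=; rewrite andNb.
have -> : SA :&: nbhd (W :|: U0) :&: nbhd U0 = SA :&: nbhd U0.
  by apply/finset.setP => x; rewrite nbhdU !inE; case: (x \in SA);
    case: [exists y in U0, adj x y]; rewrite /= ?andbT ?andbF ?orbT.
have -> : SA :&: nbhd (W :|: U0) :\: nbhd U0 = (SA :\: nbhd U0) :&: nbhd W.
  by apply/finset.setP => x; rewrite nbhdU !inE; case: (x \in SA);
    case: [exists y in U0, adj x y]; rewrite /= ?andbT ?andbF ?orbF.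
by move: tight; rewrite /hall_slack; lra.
Qed.

Lemma hall_condition_residual SA SB c b a v t :
  hall_condition SA SB c b -> 0 <= t ->
  (forall U, [&& U \subset SB, v \notin U & a \in nbhd U] ->
     t <= hall_slack SA U c b) ->
  hall_condition SA SB (dec_at c a t) (dec_at b v t).
Proof.
move=> hH t0 hU U sU; rewrite !sum_dec_at; have := hH U sU.
case: (boolP (v \in U)) => vU; case: (boolP (a \in SA :&: nbhd U)) => aN /=;
  rewrite ?mul1r ?mul0r; try lra.
move: aN; rewrite inE => /andP[_ aN].
by have := hU U; rewrite sU vU aN /hall_slack => /(_ isT); lra.
Qed.

Lemma hall_neighbor SA SB c b v :
  hall_condition SA SB c b -> v \in SB -> 0 < b v -> exists2 a, a \in SA & adj a v.
Proof.
move=> hH vSB bv; have := hH [set v]; rewrite finset.sub1set vSB big_set1 => /(_ isT).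
have [->|[a]] := set_0Vmem (SA :&: nbhd [set v]); first by rewrite big_set0; lra.
by rewrite !inE => /andP[aSA /existsP[y /andP[/set1P-> av]]]; exists a.
Qed.

Lemma hall_augment SA SB c b a v :
  a \in SA -> 0 <= c a -> 0 <= b v -> hall_condition SA SB c b ->
  exists t, [/\ 0 <= t <= c a,
    hall_condition SA SB (dec_at c a t) (dec_at b v t) &
    [\/ t = c a, t = b v |
        exists2 U0 : {set B}, [&& U0 \subset SB, v \notin U0 & a \in nbhd U0] &
                    hall_slack SA U0 (dec_at c a t) (dec_at b v t) = 0]].
Proof.
move=> aSA ca0 bv0 hH.
pose P U := [&& U \subset SB, v \notin U & a \in nbhd U].
pose slack U := hall_slack SA U c b.
(* the largest amount that can be pushed along (a, v) keeping Hall's condition *)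
pose t := \big[Num.min/Num.min (c a) (b v)]_(U | P U) slack U.
have slack0 U : P U -> 0 <= slack U.
  by case/and3P => sU _ _; rewrite /slack /hall_slack subr_ge0 hH.
have t0 : 0 <= t by apply: le_bigmin => [|U /slack0 //]; rewrite le_min ca0 bv0.
have tab : t <= Num.min (c a) (b v) by apply: bigmin_le_id.
have tU U : P U -> t <= slack U by apply: bigmin_le_cond.
exists t; split.
- by rewrite t0 (le_trans tab) // ge_min lexx.
- exact: hall_condition_residual.
case: (bigmin_attained P slack (Num.min (c a) (b v))) => [tm|[U0 PU0 tsl]].
  by rewrite /t tm; case: leP => _; [apply: Or31|apply: Or32].
apply: Or33; exists U0 => //; case/and3P: PU0 => _ vU0 aU0.
rewrite /hall_slack !sum_dec_at inE aSA aU0 (negbTE vU0) /= mul1r mul0r subr0.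
by move: tsl; rewrite -/t /slack /hall_slack; lra.
Qed.

(* lexicographic in (#|SB|, #|SA|) *)
Definition flow_measure SA SB := (#|SB| * #|A|.+1 + #|SA|)%N.

Lemma flow_measure_demand_lt SA SA' SB SB' :
  (#|SB'| < #|SB|)%N -> (flow_measure SA' SB' < flow_measure SA SB)%N.
Proof.
move=> ltB; have := max_card SA'.
have : (#|SB'|.+1 * #|A|.+1 <= #|SB| * #|A|.+1)%N by rewrite leq_mul2r ltB orbT.
rewrite /flow_measure; nia.
Qed.

Lemma flow_measure_supply_lt SA SA' SB :
  (#|SA'| < #|SA|)%N -> (flow_measure SA' SB < flow_measure SA SB)%N.
Proof. by rewrite /flow_measure; lia. Qed.

Theorem hall_feasible_flow SA SB c b :
  (forall a, 0 <= c a) -> hall_condition SA SB c b ->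
  exists f, feasible_flow SA SB c b f.
Proof.
move: {2}(flow_measure SA SB).+1 (ltnSn (flow_measure SA SB)) => k.
elim: k SA SB c b => // k IH SA SB c b hk c0 hH.
have IHm SA' SB' c' b' : (flow_measure SA' SB' < flow_measure SA SB)%N ->
    (forall a, 0 <= c' a) -> hall_condition SA' SB' c' b' ->
    exists f, feasible_flow SA' SB' c' b' f.
  by move=> lt; apply: IH; apply: leq_trans lt _; rewrite -ltnS.
have [->|[v vSB]] := set_0Vmem SB; first by exists (fun _ _ => 0); exact: feasible_flow0.
have SBv : (#|SB :\ v| < #|SB|)%N by rewrite (cardsD1 v SB) vSB.
have [bv0|bv0] := lerP (b v) 0.
  have [|f hf] := IHm SA (SB :\ v) c b (flow_measure_demand_lt _ _ SBv) c0.
    exact: hall_condition_demandS (subD1set SB v) hH.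
  by exists f; exact: feasible_flow_setD1_demand hf.
have [a aSA av] := hall_neighbor hH vSB bv0.
have [t [/andP[t0 tca] hR tcases]] := hall_augment aSA (c0 a) (ltW bv0) hH.
suff [g hg] : exists g, feasible_flow SA SB (dec_at c a t) (dec_at b v t) g.
  by eexists; exact: feasible_flow_augment hg.
have c'0 x : 0 <= dec_at c a t x by exact: dec_at_ge0.
case: tcases => [tc|tb|[U0 /and3P[sU0 vU0 aU0] tight]].
- have [||f hf] := IHm (SA :\ a) SB _ (dec_at b v t) _ c'0.
  + by apply: flow_measure_supply_lt; rewrite (cardsD1 a SA) aSA.
  + by apply: hall_condition_setD1_supply hR; rewrite tc dec_atxx.
  by exists f; exact: feasible_flow_supplyS (subD1set SA a) hf.
- have [|f hf] := IHm SA (SB :\ v) _ (dec_at b v t)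
    (flow_measure_demand_lt _ _ SBv) c'0.
    exact: hall_condition_demandS (subD1set SB v) hR.
  by exists f; apply: feasible_flow_setD1_demand hf; rewrite tb dec_atxx.
- have U0SB : (#|U0| < #|SB|)%N.
    by apply/proper_card/properP; split => //; exists v.
  have SBU0 : (#|SB :\: U0| < #|SB|)%N.
    apply/proper_card/properP; split; first exact: subsetDl.
    move: aU0; rewrite inE => /existsP[y /andP[yU0 _]].
    by exists y; [exact: (fintype.subsetP sU0)|rewrite inE yU0].
  have [f1 hf1] := IHm _ _ _ _ (flow_measure_demand_lt _ _ U0SB) c'0
    (hall_condition_restrict sU0 hR).
  have [f2 hf2] := IHm _ _ _ _ (flow_measure_demand_lt _ _ SBU0) c'0
    (hall_condition_contract sU0 tight hR).
  by exists (fun x y => f1 x y + f2 x y); exact: feasible_flow_split hf1 hf2.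
Qed.

End SupplyDemand.

Local Open Scope classical_set_scope.
Local Open Scope fset_scope.
Local Open Scope ring_scope.

Lemma lee_lt_fin (R : realType) (x y : \bar R) :
  (forall r : R, (r%:E < x)%E -> (r%:E <= y)%E) -> (x <= y)%E.
Proof.
case: x => [s| |] h; last by rewrite leNye.
- case: y h => [t| |] h; [|by rewrite leey|].
    rewrite lee_fin leNgt; apply/negP => ts.
    by have := h ((t + s) / 2); rewrite !lte_fin !lee_fin => /(_ _); lra.
  by have := h (s - 1); rewrite lte_fin ltrBlDr ltrDl ltr01 => /(_ isT).
- by rewrite leye_eq; apply/eqP/eq_infty => r; apply: h; exact: ltry.
Qed.

Lemma sum_seq_le_esum (R : realType) (T : choiceType) (a : T -> \bar R) (r : seq T) :
  uniq r -> (\sum_(y <- r) a y <= \esum_(y in [set: T]) a y)%E.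
Proof.
move=> ur; apply: esum_ge; exists [set` r]; first by split; [exact: finite_seq|].
by rewrite fsbig_seq.
Qed.

Lemma esum_le (R : realType) (T : choiceType) (a : T -> R) (m : R) :
  (forall r : seq T, uniq r -> \sum_(y <- r) a y <= m) ->
  (\esum_(y in [set: T]) (a y)%:E <= m%:E)%E.
Proof.
move=> h; apply: ge_ereal_sup => _ [F [finF _] <-].
by rewrite fsbig_finite // sumEFin lee_fin h ?fset_uniq.
Qed.

Lemma compact_fip (T : topologicalType) (K : set T) (J : choiceType)
    (g : J -> set T) :
  compact K -> (forall j, closed (g j)) ->
  (forall F : {fset J}, exists x, K x /\ forall j, j \in F -> g j x) ->
  exists x, K x /\ forall j, g j x.
Proof.
move=> Kco gcl hF.
have [[j0 _]|J0] := pselect (exists j : J, True); last first.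
  by have [x [Kx _]] := hF fset0; exists x; split=> // j; case: J0; exists j.
pose f j := (K `&` g j)%classic.
have finIf : finI setT f.
  by move=> D _; have [x [Kx hx]] := hF D; exists x => j /= jD; split; last exact: hx.
have [|p [Kp clp]] := Kco _ (finI_filter finIf).
  by exists (f j0); [apply: finI_from1|move=> ? []].
exists p; split => // j; apply: (gcl j) => B /clp HB.
have /HB [x [[_ gx] Bx]] : filter_from (finI_from setT f) id (f j).
  by exists (f j) => //; apply: finI_from1.
by exists x.
Qed.

Section ProductTopology.
Import ArrowAsProduct.
Variables (R : realType) (I : choiceType).

Lemma continuous_sum_proj (T : Type) (h : T -> I) (s : seq T) :
  continuous (fun x : I -> R => \sum_(p <- s) x (h p)).
Proof.
elim: s => [|p s IH].
  under [X in continuous X]funext do rewrite big_nil; exact: cst_continuous.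
under [X in continuous X]funext do rewrite big_cons.
move=> x; apply: (@continuousD _ R^o); last exact: IH.
exact: (@proj_continuous I (fun _ => R) (h p)).
Qed.

Lemma closed_sum_le (T : Type) (h : T -> I) (s : seq T) (r : R) :
  closed [set x : I -> R | \sum_(p <- s) x (h p) <= r].
Proof.
have := proj1 (continuous_closedP _) (continuous_sum_proj (h := h) (s := s)).
by move=> /(_ _ (@closed_le R r)).
Qed.

Lemma closed_sum_ge (T : Type) (h : T -> I) (s : seq T) (r : R) :
  closed [set x : I -> R | r <= \sum_(p <- s) x (h p)].
Proof.
have := proj1 (continuous_closedP _) (continuous_sum_proj (h := h) (s := s)).
by move=> /(_ _ (@closed_ge R r)).
Qed.

Lemma unit_box_compact : compact [set x : I -> R | forall p, 0 <= x p <= 1].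
Proof.
have := @tychonoff I (fun _ => R) (fun _ => `[0, 1]%classic)
  (fun _ => @segment_compact R 0 1).
by congr compact; apply/seteqP; split => x /= h p; have := h p; rewrite /= in_itv.
Qed.

End ProductTopology.

Lemma sum_eq_le1 (R : numDomainType) (T : eqType) (r : seq T) (x0 : T) :
  uniq r -> \sum_(x <- r) (x == x0)%:R <= 1 :> R.
Proof.
move=> ur; have := sum_indicator_seq x0 (fun=> 1 : R) ur.
under eq_bigr do rewrite mulr1; move=> ->.
by rewrite mulr1 lern1 leq_b1.
Qed.

Section AgnosticOrientation.
Variables (R : realType) (X : Type) (Y : choiceType) (n : nat).
Variables (H : set (X -> Y)) (S : 'I_n -> X).
Local Notation V := (agV Y n).
Local Notation d := (agdist R H S).

Lemma agdist_ge0 (v : V) : (0 <= d v)%E.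
Proof. by apply: le_ereal_inf_tmp => _ [h _ <-]; rewrite lee_fin ler0n. Qed.

Lemma agupd_at (v : V) i y : agupd v i y i = y.
Proof. by rewrite ffunE eqxx. Qed.

Lemma agupd_id (v : V) i : agupd v i (v i) = v.
Proof. by apply/ffunP => j; rewrite ffunE; case: eqP => // ->. Qed.

Lemma agupd_agupd (v : V) i y y' : agupd (agupd v i y) i y' = agupd v i y'.
Proof. by apply/ffunP => j; rewrite !ffunE; case: eqP. Qed.

Lemma agupd_inj (v : V) i : injective (agupd v i).
Proof. by move=> y y' /(congr1 (fun u : V => u i)); rewrite !agupd_at. Qed.

Lemma edge_key_agupd (v : V) i y : edge_key i (agupd v i y) = edge_key i v.
Proof.
congr (_, _); apply/ffunP => j; rewrite !ffunE.
by case: eqP => // /eqP ji; rewrite ffunE (negbTE ji).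
Qed.

Lemma edge_keyP (u w : V) i : edge_key i u = edge_key i w -> u = agupd w i (u i).
Proof.
move=> [] /ffunP e; apply/ffunP => j; rewrite ffunE.
by case: eqP => [->//|/eqP ji]; have := e j; rewrite !ffunE (negbTE ji) => -[].
Qed.

Lemma agdist_fineK (v : V) : d v != +oo%E -> d v = (fine (d v))%:E.
Proof. by have := agdist_ge0 v; case: (d v). Qed.

Definition hall_ratio (U : {fset V}) : \bar R :=
  ((((num_edges_touching U)%:R)%:E + \sum_(u <- U) d u) *
   ((#|` U|%:R)^-1)%:E)%E.

Lemma hall_ratio_infty (U : {fset V}) u :
  u \in U -> d u = +oo%E -> hall_ratio U = +oo%E.
Proof.
move=> uU du; have U0 : (0 < #|` U|)%N by rewrite cardfs_gt0; apply/fset0Pn; exists u.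
have dU : (\sum_(w <- U) d w = +oo)%E.
  apply/eqP; rewrite -leye_eq -du (bigD1_seq u) ?fset_uniq //=.
  by rewrite leeDl // sume_ge0 // => w _; exact: agdist_ge0.
by rewrite /hall_ratio dU addey // gt0_mulye // lte_fin invr_gt0 ltr0n.
Qed.

Lemma le_hall_ratio (b : R) (U : {fset V}) : U != fset0 ->
  (forall u, u \in U -> d u != +oo%E) ->
  (b%:E <= hall_ratio U)%E =
  (\sum_(u <- U) (b - fine (d u)) <= (num_edges_touching U)%:R).
Proof.
move=> U0 dfin; have cU : 0 < (#|` U|%:R : R) by rewrite ltr0n cardfs_gt0.
have dE u : u \in U -> d u = (fine (d u))%:E by move/dfin/agdist_fineK.
rewrite /hall_ratio big_seq (eq_bigr _ dE) -big_seq sumEFin -EFinD -EFinM sumrB.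
rewrite big_const_seq count_predT iter_addr_0.
by rewrite lee_fin ler_pdivlMr // lerBlDr mulr_natr.
Qed.

Lemma edge_inflow_le1 (o : 'I_n -> V -> R) (U : {fset V}) k :
  rand_orientation o -> \sum_(u <- U) \sum_i ((k == edge_key i u)%:R * o i u) <= 1.
Proof.
move=> [o0 o1]; pose i0 := k.1.
have inner u : \sum_i ((k == edge_key i u)%:R * o i u) =
               (k == edge_key i0 u)%:R * o i0 u.
  apply: etrans (sum_indicator i0 (fun i => (k == edge_key i u)%:R * o i u)).
  apply: eq_bigr => i _.
  case: (eqVneq i i0) => [->|ii0]; first by rewrite mul1r.
  rewrite mul0r; case: eqVneq => [kiu|]; last by rewrite mul0r.
  by move: ii0; rewrite /i0 kiu eqxx.
pose L := [seq u <- U | k == edge_key i0 u].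
have -> : \sum_(u <- U) \sum_i ((k == edge_key i u)%:R * o i u) = \sum_(u <- L) o i0 u.
  rewrite /L big_filter [RHS]big_mkcond; apply: eq_bigr => u _.
  by rewrite inner; case: eqP; rewrite ?mul1r ?mul0r.
case LE: L => [|u0 r]; first by rewrite big_nil ler01.
rewrite -LE; have : u0 \in L by rewrite LE mem_head.
rewrite mem_filter => /andP[/eqP ku0 _].
have agu u : u \in L -> u = agupd u0 i0 (u i0).
  by rewrite mem_filter => /andP[/eqP ku _]; apply: edge_keyP; rewrite -ku ku0.
rewrite big_seq (eq_bigr (fun u : V => o i0 (agupd u0 i0 (u i0)))) -?big_seq; last first.
  by move=> u /agu <-.
rewrite -(big_map (fun u : V => u i0) xpredT (fun y => o i0 (agupd u0 i0 y))).
rewrite -lee_fin -sumEFin -(o1 i0 u0); apply: sum_seq_le_esum.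
rewrite map_inj_in_uniq ?filter_uniq ?fset_uniq // => u w /agu uE /agu wE e.
by rewrite uE wE e.
Qed.

Lemma sum_indegree_le (o : 'I_n -> V -> R) (U : {fset V}) :
  rand_orientation o -> \sum_(u <- U) indegree o u <= (num_edges_touching U)%:R.
Proof.
move=> ro; rewrite /num_edges_touching.
set E := [fset edge_key i v | i in [fset i | i in 'I_n], v in U].
have -> : \sum_(u <- U) indegree o u =
    \sum_(k <- E) \sum_(u <- U) \sum_i ((k == edge_key i u)%:R * o i u).
  rewrite [RHS]exchange_big big_seq [RHS]big_seq; apply: eq_bigr => u uU /=.
  rewrite exchange_big; apply: eq_bigr => i _.
  rewrite (sum_indicator_seq _ (fun=> o i u)) ?fset_uniq //.
  suff -> : edge_key i u \in E by rewrite mul1r.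
  by apply/imfset2P; exists i; rewrite ?inE //; exists u.
rewrite -sum1_size natr_sum; apply: ler_sum => k _; exact: edge_inflow_le1.
Qed.

Lemma orientable_le_hall_ratio (a : R) (U : {fset V}) :
  ag_orientable H S a -> U != fset0 -> (a%:E <= hall_ratio U)%E.
Proof.
move=> [o [ro hind]] U0.
have [[u uU du]|dinf] := pselect (exists2 u, u \in U & d u = +oo%E).
  by rewrite (hall_ratio_infty uU du) leey.
have dfin u : u \in U -> d u != +oo%E.
  by move=> uU; apply/eqP => du; apply: dinf; exists u.
rewrite le_hall_ratio //; apply: le_trans (sum_indegree_le U ro).
rewrite big_seq [leRHS]big_seq; apply: ler_sum => u /dfin/agdist_fineK dE.
by have := hind u; rewrite dE -EFinB lee_fin.
Qed.

Definition suborientation (x : 'I_n -> V -> R) :=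
  (forall i v, 0 <= x i v) /\
  (forall i v (s : seq Y), uniq s -> \sum_(y <- s) x i (agupd v i y) <= 1).

Lemma suborientation_orientable (b : R) x : suborientation x ->
  (forall v, (b%:E - d v <= (indegree x v)%:E)%E) -> ag_orientable H S b.
Proof.
move=> [x0 x1] xd.
have [[y0 _]|Y0] := pselect (exists y : Y, True); last first.
  by exists x; split=> //; split=> // i v; case: Y0; exists (v i).
pose es i v := (\esum_(y in [set: Y]) (x i (agupd v i y))%:E)%E.
have es0 i v : (0 <= es i v)%E by apply: esum_ge0 => y _; rewrite lee_fin.
have es1 i v : (es i v <= 1%:E)%E by apply: esum_le; apply: x1.
pose m i v := fine (es i v).
have esE i v : es i v = (m i v)%:E.
  by have := es0 i v; have := es1 i v; rewrite /m; case: (es i v).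
have m1 i v : 0 <= 1 - m i v by rewrite subr_ge0 -lee_fin -esE.
have mU i v y : m i (agupd v i y) = m i v.
  by rewrite /m /es; congr fine; apply: eq_esum => y' _; rewrite agupd_agupd.
(* the mass an edge fails to deliver under [x] goes to its endpoint labelled [y0] *)
pose o i v := x i v + (1 - m i v) * (v i == y0)%:R.
exists o; split; first split.
- by move=> i v; rewrite addr_ge0 // mulr_ge0.
- move=> i v; rewrite /o; under eq_esum do rewrite EFinD mU agupd_at.
  rewrite esumD => [|y _|y _]; rewrite ?lee_fin ?mulr_ge0 //.
  rewrite -/(es i v) esE (esumID [set y0]) => [|y _]; rewrite ?lee_fin ?mulr_ge0 //.
  rewrite setTI esum_set1 ?eqxx ?mulr1 ?lee_fin // esum1 ?adde0; last first.
    by move=> y [_ /= /eqP /negbTE ->]; rewrite mulr0.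
  by rewrite -EFinD addrC subrK.
- move=> v; apply: le_trans (xd v) _; rewrite lee_fin; apply: ler_sum => i _.
  by rewrite lerDl mulr_ge0.
Qed.

Section Compactness.
Import ArrowAsProduct.

Lemma suborientation_compactness (b : R) :
  (forall F : {fset V}, exists2 x, suborientation x &
     forall v, v \in F -> (b%:E - d v <= (indegree x v)%:E)%E) ->
  exists2 x, suborientation x & forall v, (b%:E - d v <= (indegree x v)%:E)%E.
Proof.
move=> hF.
pose g (j : (V + ('I_n * V * seq Y))%type) : set ('I_n * V -> R) :=
  match j with
  | inl v => if d v is r%:E then [set x | b - r <= \sum_i x (i, v)] else setT
  | inr (i, v, s) =>
      if uniq s then [set x | \sum_(y <- s) x (i, agupd v i y) <= 1] else setT
  end.
have gcl j : closed (g j).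
  case: j => [v|[[i v] s]] /=.
    by case: (d v) => [r||]; [exact: closed_sum_ge|exact: closedT|exact: closedT].
  by case: (uniq s); [exact: closed_sum_le|exact: closedT].
have [|x [Kx gx]] := compact_fip (@unit_box_compact R ('I_n * V)%type) gcl.
  move=> D; pose F := [fset v in pmap (fun j => if j is inl v then Some v else None) D].
  have [x [x0 x1] xd] := hF F.
  exists (fun p => x p.1 p.2); split.
    move=> [i v] /=; rewrite x0 /=.
    by have := x1 i v [:: v i] isT; rewrite big_seq1 agupd_id.
  case=> [v|[[i v] s]] /= jD; last by case us: (uniq s) => //=; exact: x1.
  have vF : v \in F by rewrite inE mem_pmap; apply/mapP; exists (inl v).
  by have := xd v vF; case: (d v) => //= r; rewrite -EFinB lee_fin.
exists (fun i v => x (i, v)); first split.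
- by move=> i v; case/andP: (Kx (i, v)).
- by move=> i v s us; have := gx (inr (i, v, s)); rewrite /= us.
- move=> v; have := gx (inl v); rewrite /g; have := agdist_ge0 v.
  by case: (d v) => [r| |] //= _; rewrite ?lee_fin // addeNy leNye.
Qed.

End Compactness.

Section FiniteStage.
Variables (b : R) (F : {fset V}).
Hypothesis hb : forall U : {fset V}, U != fset0 -> (b%:E <= hall_ratio U)%E.

Let KE := [fset edge_key i v | i in [fset i | i in 'I_n], v in F].
Let adj (k : KE) (u : F) := val k == edge_key (val k).1 (val u).
Let demand (u : F) := if d (val u) is r%:E then b - r else 0.

Lemma finite_hall :
  hall_condition adj [set: KE] [set: F] (fun=> 1) demand.
Proof.
move=> U _; rewrite finset.setTI sumr_const (bigID (fun u => 0 < demand u)) /=.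
have neg : \sum_(u in U | ~~ (0 < demand u)) demand u <= 0.
  by apply: sumr_le0 => u /andP[_]; rewrite -leNgt.
suff : \sum_(u in U | 0 < demand u) demand u <= #|nbhd adj U|%:R by lra.
pose U' := [fset val u | u in [seq u <- enum U | 0 < demand u]].
have fin_demand (u : F) : 0 < demand u -> d (val u) != +oo%E.
  by rewrite /demand; case: (d (val u)); rewrite ?ltxx.
have -> : \sum_(u in U | 0 < demand u) demand u = \sum_(v <- U') (b - fine (d v)).
  rewrite big_imfset /=; last by move=> u w _ _; apply: val_inj.
  rewrite undup_id ?big_filter ?big_enum_cond; last exact/filter_uniq/enum_uniq.
  apply: eq_bigr => u /andP[_ /fin_demand].
  by move/agdist_fineK; rewrite /demand => ->.
have [->|U'0] := eqVneq U' fset0; first by rewrite big_nil ler0n.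
have U'dfin v : v \in U' -> d v != +oo%E.
  by case/imfsetP => u /=; rewrite mem_filter => /andP[/fin_demand + _] ->.
apply: (le_trans (_ : _ <= (num_edges_touching U')%:R)).
  by rewrite -le_hall_ratio // hb.
rewrite ler_nat /num_edges_touching.
apply: (@leq_trans #|` [fset val k | k in enum (nbhd adj U)]|).
  apply/fsubset_leq_card/fsubsetP => _ /imfset2P[i _ [_ /imfsetP[u /= uP ->] ->]].
  have kin : edge_key i (val u) \in KE.
    by apply/imfset2P; exists i; rewrite ?inE //; exists (val u); rewrite ?fsvalP.
  apply/imfsetP; exists [` kin] => //=; rewrite mem_enum inE.
  apply/existsP; exists u; rewrite /adj /= eqxx andbT.
  by move: uP; rewrite mem_filter mem_enum => /andP[].
by rewrite (leq_trans (leq_imfset_card _ _ _)) //= undup_id ?enum_uniq // -cardE.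
Qed.

(* the flow from the edge [edge_key i w] into [w], zero unless [w] is in [F] *)
Let edge_flow (f : KE -> F -> R) i (w : V) :=
  \sum_(u : F) ((val u == w)%:R * \sum_(k : KE) ((val k == edge_key i w)%:R * f k u)).

Lemma edge_flow_suborientation f :
  feasible_flow adj [set: KE] [set: F] (fun=> 1) demand f -> suborientation (edge_flow f).
Proof.
move=> [f0 _ fc _]; split=> [i w|i v s us].
  by apply: sumr_ge0 => u _; rewrite mulr_ge0 // sumr_ge0 // => k _; rewrite mulr_ge0.
pose k0 := edge_key i v.
pose G u := \sum_(k : KE) ((val k == k0)%:R * f k u).
have G0 u : 0 <= G u by apply: sumr_ge0 => k _; rewrite mulr_ge0.
have -> : \sum_(y <- s) edge_flow f i (agupd v i y) =
          \sum_(u : F) (\sum_(y <- s) (val u == agupd v i y)%:R) * G u.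
  rewrite exchange_big; apply: eq_bigr => u _; rewrite mulr_suml.
  by apply: eq_bigr => y _; rewrite /G /k0 edge_key_agupd.
apply: (@le_trans _ _ (\sum_(u : F) G u)).
  apply: ler_sum => u _; apply: ler_piMl => //.
  under eq_bigr do rewrite eq_sym.
  rewrite -(big_map (agupd v i) xpredT (fun z => (z == val u)%:R)).
  by apply: sum_eq_le1; rewrite map_inj_uniq //; exact: agupd_inj.
rewrite /G exchange_big /=; apply: (@le_trans _ _ (\sum_(k : KE) (val k == k0)%:R)).
  by apply: ler_sum => k _; rewrite -mulr_sumr ler_piMr.
rewrite -(big_map val xpredT (fun k => (k == k0)%:R)); apply: sum_eq_le1.
by rewrite map_inj_uniq ?index_enum_uniq //; exact: val_inj.
Qed.

Lemma edge_flow_serves f :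
  feasible_flow adj [set: KE] [set: F] (fun=> 1) demand f ->
  forall v, v \in F -> (b%:E - d v <= (indegree (edge_flow f) v)%:E)%E.
Proof.
move=> [_ fs _ fb] v vF; pose u := [` vF] : F.
have flowE i : edge_flow f i v = \sum_(k : KE) ((val k == edge_key i v)%:R * f k u).
  pose g (u' : F) := \sum_(k : KE) ((val k == edge_key i v)%:R * f k u').
  by apply: etrans (sum_indicator u g); apply: eq_bigr => u' _; rewrite -val_eqE.
have kE k : \sum_i ((val k == edge_key i v)%:R * f k u) = f k u.
  have [->|/fs /and3P[/eqP ak _ _]] := eqVneq (f k u) 0.
    by rewrite big1 // => i _; rewrite mulr0.
  apply: etrans (sum_indicator (val k).1 (fun=> f k u)); apply: eq_bigr => i _.
  rewrite [in LHS]ak.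
  case: (eqVneq i (val k).1) => [->|ik]; rewrite ?eqxx //.
  by rewrite /edge_key; case: eqP => // -[ki _]; move: ik; rewrite ki eqxx.
rewrite /indegree; under eq_bigr do rewrite flowE.
rewrite exchange_big /=; under eq_bigr do rewrite kE.
have := fb u (finset.in_setT u).
rewrite /demand /=; have := agdist_ge0 v.
by case: (d v) => [r| |] //= _; rewrite ?lee_fin // addeNy leNye.
Qed.

Lemma finite_suborientation : exists2 x, suborientation x &
  forall v, v \in F -> (b%:E - d v <= (indegree x v)%:E)%E.
Proof.
have [f hf] := hall_feasible_flow (fun=> ler01) finite_hall.
by exists (edge_flow f); [exact: edge_flow_suborientation|exact: edge_flow_serves].
Qed.

End FiniteStage.

Lemma hall_ratio_orientable (b : R) :
  (forall U : {fset V}, U != fset0 -> (b%:E <= hall_ratio U)%E) ->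
  ag_orientable H S b.
Proof.
move=> hb.
have [x xsub xserve] := suborientation_compactness (fun F => finite_suborientation F hb).
exact: suborientation_orientable xsub xserve.
Qed.

End AgnosticOrientation.

Theorem propositionF1 (R : realType) (X : Type) (Y : choiceType) (n : nat)
    (H : set (X -> Y)) (S : 'I_n -> X) :
  hall_ag R H S =
  ereal_sup [set alpha%:E | alpha in [set alpha : R | ag_orientable H S alpha]].
Proof.
apply/eqP; rewrite eq_le; apply/andP; split.
- apply: lee_lt_fin => r hr; apply: ereal_sup_ubound; exists r => //.
  apply: hall_ratio_orientable => U U0; apply: le_trans (ltW hr) _.
  by apply: ereal_inf_lbound; exists U.
- apply: ge_ereal_sup => _ [a ha <-].
  by apply: le_ereal_inf_tmp => _ [U U0 <-]; exact: orientable_le_hall_ratio.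
Qed.
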